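(* Let $n,m\in\mathbb N$, $d:=\min\{n,m\}$, and $k\in\{1,\dots,d\}$. (i) For nonzero positive semidefinite $\rho\in\mathbb M_n\otimes\mathbb M_m$: $\rho\in\mathsf K_k\iff\mathrm{FSN}(\rho)\le k$. Consequently $\min\{\ell\in\{1,\dots,d\}:\rho\in\mathsf K_\ell\}=\lceil\mathrm{FSN}(\rho)\rceil$. (ii) For a Hermitian-preserving map $\Phi:\mathbb M_n\to\mathbb M_m$ with $\Phi\in\mathsf P_1$: $\Phi\in\mathsf P_k\iff\tau(\Phi)\ge k$.
   Context: For $\psi=\sum_{i,j}a_{ij}e_i\otimes f_j\in\mathbb C^n\otimes\mathbb C^m$, its Schmidt coefficients $s_1(\psi)\ge\dots\ge s_d(\psi)\ge0$ are the singular values of $[a_{ij}]$. For $\alpha\in[1,d]$ with $k'=\lfloor\alpha\rfloor$, $\theta=\alpha-k'$, $r=\lceil\alpha\rceil$, a unit vector $\psi$ is $\alpha$-admissible if $s_j(\psi)=0$ for $j\ge r+1$ and, when $\theta>0$, $s_{k'+1}(\psi)\le\frac\theta{k'}\sum_{j=1}^{k'}s_j(\psi)$; $\mathcal V_\alpha$ is the set of these. $\mathsf K_\alpha$ is the closure of the convex cone generated by $\{\psi\psi^\ast:\psi\in\mathcal V_\alpha\}$. The Choi matrix is $C_\Phi=\sum_{i,j}E_{ij}\otimes\Phi(E_{ij})$, and a Hermitian-preserving $\Phi$ is in $\mathsf P_\alpha$ if $\langle\psi,C_\Phi\psi\rangle\ge0$ for all $\psi\in\mathcal V_\alpha$. $\mathrm{FSN}(\rho):=\inf\{\alpha\in[1,d]:\rho\in\mathsf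 K_\alpha\}$ for nonzero positive semidefinite $\rho$, and $\tau(\Phi):=\sup\{\alpha\in[1,d]:\Phi\in\mathsf P_\alpha\}$ for Hermitian-preserving $\Phi\in\mathsf P_1$. *)

From HB Require Import structures.
From mathcomp Require Import all_boot all_order all_algebra.
From mathcomp Require Import boolp classical_sets reals.
From mathcomp Require Import complex mxtens.
Set Implicit Arguments. Unset Strict Implicit. Unset Printing Implicit Defensive.
Import Order.TTheory GRing.Theory Num.Theory ComplexField.
Local Open Scope classical_set_scope.
Local Open Scope ring_scope.

Section Defs.
Variable R : realType.
Local Notation C := (R[i]).

Definition adjmx p q (A : 'M[C]_(p, q)) : 'M[C]_(q, p) := map_mx Num.conj A^T.

Definition unitarymx p (U : 'M[C]_p) : Prop := U *m adjmx U = 1%:M.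

Definition hermitian p (A : 'M[C]_p) : Prop := adjmx A = A.

Definition psd p (A : 'M[C]_p) : Prop :=
  hermitian A /\ forall v : 'cV[C]_p, 0 <= (adjmx v *m A *m v) 0 0.

Definition rdiag n m (s : nat -> R) : 'M[C]_(n, m) :=
  \matrix_(i, j) (if (i == j :> nat) then ((s i)%:C)%C else 0).

(* s (0-indexed: s 0 >= s 1 >= ... >= s (d-1) >= 0, s j = 0 for j >= d)
   is the sequence of singular values of A, d = min n m, i.e.
   A = U diag(s) V^* for unitaries U, V. *)
Definition singular_values n m (A : 'M[C]_(n, m)) (s : nat -> R) : Prop :=
  (forall j, (j.+1 < minn n m)%N -> s j.+1 <= s j) /\
  (forall j, (j < minn n m)%N -> 0 <= s j) /\
  (forall j, (minn n m <= j)%N -> s j = 0) /\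
  exists (U : 'M[C]_n) (V : 'M[C]_m),
    unitarymx U /\ unitarymx V /\ A = U *m rdiag n m s *m adjmx V.

Definition psi_vec n m (A : 'M[C]_(n, m)) : 'cV[C]_(n * m) :=
  \sum_(i < n) \sum_(j < m) A i j *: (delta_mx i (0 : 'I_1) *t delta_mx j (0 : 'I_1)).

Definition unit_vec n m (A : 'M[C]_(n, m)) : Prop :=
  \sum_(i < n) \sum_(j < m) `|A i j| ^+ 2 = 1.

(* alpha-admissible unit vectors (Schmidt coefficients are 0-indexed here:
   paper's s_j is s (j-1)) *)
Definition admissible n m (alpha : R) (A : 'M[C]_(n, m)) : Prop :=
  unit_vec A /\
  exists s : nat -> R, singular_values A s /\
    (forall j : nat, Num.ceil alpha <= j%:Z -> s j = 0) /\
    (let k' := Num.truncn alpha in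
     let theta := alpha - k'%:R in
     0 < theta -> s k' <= theta / k'%:R * \sum_(j < k') s j).

Definition proj n m (A : 'M[C]_(n, m)) : 'M[C]_(n * m) :=
  psi_vec A *m adjmx (psi_vec A).

Definition cone_V n m (alpha : R) (rho : 'M[C]_(n * m)) : Prop :=
  exists (N : nat) (c : 'I_N -> R) (A : 'I_N -> 'M[C]_(n, m)),
    (forall l, 0 <= c l /\ admissible alpha (A l)) /\
    rho = \sum_(l < N) ((c l)%:C)%C *: proj (A l).

Definition Kset n m (alpha : R) (rho : 'M[C]_(n * m)) : Prop :=
  forall e : R, 0 < e -> exists sigma, @cone_V n m alpha sigma /\
    forall p q, `|rho p q - sigma p q| < (e%:C)%C.

Definition choi n m (Phi : 'M[C]_n -> 'M[C]_m) : 'M[C]_(n * m) :=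
  \sum_(i < n) \sum_(j < n) (delta_mx i j *t Phi (delta_mx i j)).

Definition herm_preserving n m (Phi : 'M[C]_n -> 'M[C]_m) : Prop :=
  forall X, hermitian X -> hermitian (Phi X).

Definition Pset n m (alpha : R) (Phi : 'M[C]_n -> 'M[C]_m) : Prop :=
  forall A : 'M[C]_(n, m), admissible alpha A ->
    0 <= (adjmx (psi_vec A) *m choi Phi *m psi_vec A) 0 0.

Definition FSN n m (rho : 'M[C]_(n * m)) : R :=
  inf [set a : R | 1 <= a <= (minn n m)%:R /\ @Kset n m a rho].

Definition tau n m (Phi : 'M[C]_n -> 'M[C]_m) : R :=
  sup [set a : R | 1 <= a <= (minn n m)%:R /\ Pset a Phi].

End Defs.

Arguments cone_V {R} n m alpha rho.
Arguments Kset {R} n m alpha rho.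
Arguments FSN {R} n m rho.
Arguments tau {R n m} Phi.

From Pilot Require Import Defs.
From HB Require Import structures.
From mathcomp Require Import all_boot all_order all_algebra.
From mathcomp Require Import boolp classical_sets reals.
From mathcomp Require Import complex mxtens.
From mathcomp Require Import spectral.
From mathcomp Require Import ring lra.
Import Order.TTheory GRing.Theory Num.Theory ComplexField.
Local Open Scope ring_scope.
Set Implicit Arguments. Unset Strict Implicit. Unset Printing Implicit Defensive.

(* Admissibility only gets weaker as alpha grows, so K_alpha increases and
   P_alpha decreases with alpha, and every positive semidefinite rho lies in
   K_d by its spectral decomposition, every unit vector being d-admissible.
   Both equivalences thus reduce to one-sided continuity at integers k.
   K_k is the intersection of the K_(k+t), t > 0: a (k+t)-admissible unit
   vector has s_(k+1) <= t, so it is within O(t) of a multiple of the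
   k-admissible vector obtained by dropping s_(k+1).  P_(k+1) is the
   intersection of the P_(k+t), t < 1: lowering s_(k+1) by eps > 0 makes a
   (k+1)-admissible vector (k+t)-admissible, and positivity of the Choi form
   survives eps -> 0.  The least integer l with rho in K_l is then the
   ceiling of FSN(rho). *)

Section Adjoint.
Variable R : realType.
Local Notation C := (R[i]).

Lemma adjmxE p q (A : 'M[C]_(p, q)) i j : adjmx A i j = (A j i)^*.
Proof. by rewrite !mxE. Qed.

Lemma adjmxK p q (A : 'M[C]_(p, q)) : adjmx (adjmx A) = A.
Proof. by apply/matrixP => i j; rewrite !mxE conjCK. Qed.

Lemma adjmxM p q r (A : 'M[C]_(p, q)) (B : 'M[C]_(q, r)) :
  adjmx (A *m B) = adjmx B *m adjmx A.
Proof. by rewrite /adjmx trmx_mul map_mxM. Qed.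

Lemma adjmxB p q (A B : 'M[C]_(p, q)) : adjmx (A - B) = adjmx A - adjmx B.
Proof. by apply/matrixP => i j; rewrite !mxE rmorphB. Qed.

Lemma adjmxZ p q a (A : 'M[C]_(p, q)) : adjmx (a *: A) = a^* *: adjmx A.
Proof. by apply/matrixP => i j; rewrite !mxE rmorphM. Qed.

(* [adjmx A] is convertible to [A ^t*] of [spectral], so [unitarymxP] applies. *)
Lemma unitary_mul_adj p q (U : 'M[C]_(p, q)) : U \is unitarymx -> U *m adjmx U = 1%:M.
Proof. by move/unitarymxP. Qed.

Lemma unitary_adj_mul p (U : 'M[C]_p) : U \is unitarymx -> adjmx U *m U = 1%:M.
Proof. by move/unitary_mul_adj; apply: mulmx1C. Qed.

Lemma adjmx_unitary p (U : 'M[C]_p) : U \is unitarymx -> adjmx U \is unitarymx.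
Proof.
move=> hU; apply/unitarymxP; change (adjmx U *m adjmx (adjmx U) = 1%:M).
by rewrite adjmxK unitary_adj_mul.
Qed.

End Adjoint.

Section TensorVector.
Variable R : realType.
Local Notation C := (R[i]).

Lemma psi_vecE n m (A : 'M[C]_(n, m)) k :
  psi_vec A k 0 = A (mxtens_unindex k).1 (mxtens_unindex k).2.
Proof.
have k0 : mxtens_unindex (0 : 'I_(1 * 1)) = (0, 0).
  by case: (mxtens_unindex _) => a b; rewrite !ord1.
case: (mxtens_unindex k) (mxtens_unindexK k) => i j /= <-.
rewrite /psi_vec summxE (bigD1 i) //= [X in _ + X]big1 ?addr0 => [|i' ni'].
  rewrite summxE (bigD1 j) //= [X in _ + X]big1 ?addr0 => [|j' nj'].
    by rewrite !mxE mxtens_indexK k0 /= !eqxx !mulr1.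
  by rewrite !mxE mxtens_indexK k0 /= eq_sym (negbTE nj') !mulr0.
rewrite summxE big1 // => j' _.
by rewrite !mxE mxtens_indexK k0 /= eq_sym (negbTE ni') mul0r mulr0.
Qed.

Lemma psi_vec_index n m (A : 'M[C]_(n, m)) i j :
  psi_vec A (mxtens_index (i, j)) 0 = A i j.
Proof. by rewrite psi_vecE mxtens_indexK. Qed.

Definition psi_mx n m (v : 'cV[C]_(n * m)) : 'M[C]_(n, m) :=
  \matrix_(i, j) v (mxtens_index (i, j)) 0.

Lemma psi_mxK n m (v : 'cV[C]_(n * m)) : psi_vec (psi_mx v) = v.
Proof.
by apply/matrixP => k z; rewrite ord1 psi_vecE mxE -surjective_pairing mxtens_unindexK.
Qed.

Lemma psi_vecB n m (A B : 'M[C]_(n, m)) : psi_vec (A - B) = psi_vec A - psi_vec B.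
Proof. by apply/matrixP => k z; rewrite ord1 !mxE !psi_vecE !mxE. Qed.

Lemma psi_vecZ n m a (A : 'M[C]_(n, m)) : psi_vec (a *: A) = a *: psi_vec A.
Proof. by apply/matrixP => k z; rewrite ord1 !mxE !psi_vecE mxE. Qed.

Lemma sum_mxtens n m (F : 'I_(n * m) -> C) :
  \sum_k F k = \sum_(i < n) \sum_(j < m) F (mxtens_index (i, j)).
Proof.
rewrite pair_big (reindex (@mxtens_unindex n m)) /=.
  by apply: eq_bigr => k _; rewrite mxtens_unindexK.
by exists (@mxtens_index n m) => x _; rewrite ?mxtens_indexK ?mxtens_unindexK.
Qed.

Definition fro n m (A : 'M[C]_(n, m)) : C := \sum_i \sum_j `|A i j| ^+ 2.

Lemma psi_vec_dot n m (A : 'M[C]_(n, m)) :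
  (adjmx (psi_vec A) *m psi_vec A) 0 0 = fro A.
Proof.
rewrite mxE sum_mxtens; apply: eq_bigr => i _; apply: eq_bigr => j _.
by rewrite adjmxE psi_vec_index normCKC.
Qed.

Lemma fro_mxtrace n m (A : 'M[C]_(n, m)) : fro A = \tr (A *m adjmx A).
Proof.
apply: eq_bigr => i _; rewrite mxE; apply: eq_bigr => j _.
by rewrite adjmxE normCK.
Qed.

Lemma entry_le_fro n m (A : 'M[C]_(n, m)) i j : `|A i j| ^+ 2 <= fro A.
Proof.
have ge0 a b : 0 <= `|A a b| ^+ 2 by rewrite exprn_ge0.
rewrite /fro (bigD1 i) //= (bigD1 j) //= -addrA lerDl addr_ge0 ?sumr_ge0 //.
by move=> a _; rewrite sumr_ge0.
Qed.

Lemma projE n m (A : 'M[C]_(n, m)) p q :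
  proj A p q = psi_vec A p 0 * (psi_vec A q 0)^*.
Proof. by rewrite /proj mxE big_ord1 adjmxE. Qed.

End TensorVector.

Section SVD.
Variable R : realType.
Local Notation C := (R[i]).

(* [conjc_real], stated for the [Num.conj] of [R[i]]. *)
Lemma conjC_real (x : R) : (x%:C%C : C)^* = x%:C%C.
Proof. exact: conjc_real. Qed.

Definition sv_seq n m (s : nat -> R) : Prop :=
  [/\ forall i j, (i <= j)%N -> s j <= s i, forall j, 0 <= s j &
      forall j, (minn n m <= j)%N -> s j = 0].

Lemma singular_values_seq n m (A : 'M[C]_(n, m)) s :
  singular_values A s -> sv_seq n m s.
Proof.
move=> [s_dec [s_ge0 [s_min _]]].
have ge0 j : 0 <= s j.
  by case: (ltnP j (minn n m)) => hj; [apply: s_ge0 | rewrite s_min].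
split=> // i j /subnK <-; elim: (j - i)%N => [|k IH] //=.
apply: le_trans IH; rewrite addSn.
by case: (ltnP (k + i).+1 (minn n m)) => hk; [apply: s_dec | rewrite s_min].
Qed.

Lemma singular_values_svd n m (U : 'M[C]_n) (V : 'M[C]_m) s :
  U \is unitarymx -> V \is unitarymx -> sv_seq n m s ->
  singular_values (U *m rdiag n m s *m adjmx V) s.
Proof.
move=> /unitarymxP hU /unitarymxP hV [s_anti s_ge0 s_min].
by split=> [j _|]; [apply: s_anti | do !split=> //; exists U, V].
Qed.

Lemma rdiag_mul_adj n m (s : nat -> R) :
  rdiag n m s *m adjmx (rdiag n m s) =
  \matrix_(i, k) (if (i == k) && (i < m)%N then ((s i) ^+ 2)%:C%C else 0).
Proof.
apply/matrixP => i k; rewrite !mxE.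
case: (ltnP i m) => [him|hmi]; last first.
  rewrite andbF big1 // => j _; rewrite !mxE.
  by rewrite (gtn_eqF (leq_trans (ltn_ord j) hmi)) mul0r.
rewrite (bigD1 (Ordinal him)) //= big1 ?addr0 => [|j hj]; last first.
  rewrite !mxE (_ : (i == j :> nat) = false) ?mul0r //.
  by apply: contraNF hj => /eqP h; apply/eqP/val_inj.
rewrite !mxE /= !eqxx andbT -val_eqE /= [(k == i :> nat)]eq_sym.
by case: eqP => [->|_]; rewrite ?conjC_real -?rmorphM ?expr2 ?conjC0 ?mulr0.
Qed.

Lemma fro_svd n m (U : 'M[C]_n) (V : 'M[C]_m) (s : nat -> R) :
  U \is unitarymx -> V \is unitarymx ->
  fro (U *m rdiag n m s *m adjmx V) = (\sum_(i < n | (i < m)%N) (s i) ^+ 2)%:C%C.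
Proof.
move=> hU hV; rewrite fro_mxtrace !adjmxM adjmxK.
rewrite -!mulmxA [adjmx V *m _]mulmxA unitary_adj_mul // mul1mx.
rewrite [rdiag _ _ _ *m _]mulmxA mulmxA mxtrace_mulC !mulmxA unitary_adj_mul // mul1mx.
rewrite rdiag_mul_adj /mxtrace rmorph_sum.
rewrite (bigID (fun i : 'I_n => (i < m)%N)) /= [X in _ + X]big1 ?addr0.
  by apply: eq_bigr => i him; rewrite mxE eqxx him.
by move=> i /negbTE him; rewrite mxE him andbF.
Qed.

Lemma hermitian_spectral p (H : 'M[C]_p) : Defs.hermitian H ->
  exists (P : 'M[C]_p) (d : 'rV[C]_p), P \is unitarymx /\ H = adjmx P *m diag_mx d *m P.
Proof.
move=> hH; have /orthomx_spectralP E : H \is normalmx.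
  by apply/normalmxP; change (H *m adjmx H = adjmx H *m H); rewrite hH.
exists (spectralmx H), (spectral_diag H); split; first exact: spectral_unitarymx.
by rewrite {1}E invmx_unitary // spectral_unitarymx.
Qed.

Lemma sort_ord_antitone p (f : 'I_p -> R) :
  exists2 h : 'I_p -> 'I_p, injective h &
    forall i j : 'I_p, (i <= j)%N -> f (h j) <= f (h i).
Proof.
pose r i j := f j <= f i.
have r_total : total r by move=> i j; apply: le_total.
have r_trans : transitive r by move=> j i k hij hjk; apply: le_trans hjk hij.
pose t := sort_tuple r (ord_tuple p).
exists (tnth t); first by apply/tuple_uniqP; rewrite sort_uniq enum_uniq.
move=> i j hij; rewrite !(tnth_nth i).
have := sorted_leq_nth r_trans (fun x => le_refl _) i (sort_sorted r_total (ord_tuple p)).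
rewrite size_sort size_tuple; apply=> //; exact: ltn_ord.
Qed.

Lemma hermitian_spectral_sorted p (H : 'M[C]_p) : Defs.hermitian H ->
  exists (P : 'M[C]_p) (d : 'rV[C]_p), [/\ P \is unitarymx, H = adjmx P *m diag_mx d *m P &
    forall i j : 'I_p, (i <= j)%N -> complex.Re (d 0 j) <= complex.Re (d 0 i)].
Proof.
move=> /hermitian_spectral [P0 [d0 [/unitarymxP hP0 E]]].
have [h h_inj h_sorted] := sort_ord_antitone (fun i => complex.Re (d0 0 i)).
exists (\matrix_(i, j) P0 (h i) j), (\row_i d0 0 (h i)); split => //.
- apply/unitarymxP/matrixP => i k; move/matrixP: hP0 => /(_ (h i) (h k)).
  rewrite !mxE (inj_eq h_inj) => <-.
  by apply: eq_bigr => j _; rewrite !mxE.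
- apply/matrixP => a b; rewrite E !mul_mx_diag !mxE (reindex_inj h_inj) /=.
  by apply: eq_bigr => l _; rewrite !mxE.
- by move=> i j hij; rewrite !mxE; apply: h_sorted.
Qed.

Local Notation "B ^!" :=
  (orthomx Num.conj (mx_of_hermitian (hermitian1mx _)) B) : matrix_set_scope.

Lemma castmx_unitary p q (e : p = q) (M : 'M[C]_(p, q)) :
  M \is unitarymx -> castmx (e, erefl q) M \is unitarymx.
Proof. by case: q / e in M *; rewrite castmx_id. Qed.

Lemma unitarymx_complete r n (X : 'M[C]_(r, n)) : X \is unitarymx ->
  exists2 U : 'M[C]_n, U \is unitarymx &
    forall (i : 'I_n) (hi : (i < r)%N) k, U i k = X (Ordinal hi) k.
Proof.
move=> hX; pose Z := schmidt (row_base (X^!)%MS).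
have hZX : (Z <= X^!)%MS by rewrite eqmx_schmidt_free ?row_base_free // eq_row_base.
have hXZ : (X <= Z^!)%MS by rewrite orthomx_sym.
have hM : col_mx X Z \is unitarymx.
  apply/unitarymxP; rewrite tr_col_mx map_row_mx mul_col_row.
  rewrite (unitarymxP hX) (unitarymxP (schmidt_unitarymx _ (rank_leq_col _))).
  by rewrite (orthomx1P hXZ) (orthomx1P hZX) -scalar_mx_block.
have e : (r + \rank (X^!)%MS)%N = n by rewrite -{1}(mxrank_unitary hX) add_rank_ortho.
exists (castmx (e, erefl n) (col_mx X Z)); first exact: castmx_unitary.
move=> i hi k; rewrite castmxE /= cast_ord_id.
by rewrite (_ : cast_ord _ i = lshift _ (Ordinal hi)) ?col_mxEu //; apply: val_inj.
Qed.

Lemma antitone_support (s : nat -> R) m :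
  (forall i j, (i <= j)%N -> s j <= s i) -> (forall j, 0 <= s j) -> s m = 0 ->
  exists r, [/\ (r <= m)%N, forall j, (j < r)%N -> 0 < s j &
                 forall j, (r <= j)%N -> s j = 0].
Proof.
move=> s_anti s_ge0 sm0; have ex0 : exists j, s j == 0 by exists m; rewrite sm0.
case: (ex_minnP ex0) => r /eqP sr0 r_min; exists r; split=> [|j hj|j hj].
- by apply: r_min; rewrite sm0.
- by rewrite lt_def s_ge0 andbT; apply/negP => /r_min; rewrite leqNgt hj.
- by apply/eqP; rewrite eq_le s_ge0 -sr0 s_anti.
Qed.

Lemma gram_normalized_unitary n m r (B : 'M[C]_(n, m)) (s : nat -> R)
    (r_le_m : (r <= m)%N) :
  adjmx B *m B = diag_mx (\row_j ((s j) ^+ 2)%:C%C) ->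
  (forall j, (j < r)%N -> 0 < s j) ->
  \matrix_(i < r, k < n) (B k (widen_ord r_le_m i) / (s i)%:C%C) \is unitarymx.
Proof.
move=> hBB s_pos; apply/unitarymxP/matrixP => i j.
have s_neq0 (l : 'I_r) : (s l)%:C%C != 0 :> C by rewrite fmorph_eq0 gt_eqF ?s_pos.
rewrite !mxE; transitivity ((adjmx B *m B) (widen_ord r_le_m j) (widen_ord r_le_m i)
                              / ((s i)%:C%C * (s j)%:C%C)).
  rewrite [in RHS]mxE mulr_suml; apply: eq_bigr => k _.
  by rewrite !mxE rmorphM fmorphV /= conjC_real invfM; ring.
rewrite hBB !mxE; case: (altP (i =P j)) => [->|nij].
  rewrite eqxx /= mulr1n -expr2 -rmorphXn divff // fmorph_eq0.
  by rewrite expf_neq0 // gt_eqF ?s_pos.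
rewrite (_ : (_ == _) = false) ?mulr0n ?mul0r //.
by apply: contraNF nij => /eqP [] ji; apply/eqP/val_inj.
Qed.

Lemma gram_diag_factor n m (B : 'M[C]_(n, m)) (s : nat -> R) :
  (forall i j, (i <= j)%N -> s j <= s i) -> (forall j, 0 <= s j) ->
  (forall j, (m <= j)%N -> s j = 0) ->
  adjmx B *m B = diag_mx (\row_j ((s j) ^+ 2)%:C%C) ->
  sv_seq n m s /\ exists2 U : 'M[C]_n, U \is unitarymx & B = U *m rdiag n m s.
Proof.
move=> s_anti s_ge0 s_m hBB.
have [r [r_le_m s_pos s_zero]] := antitone_support s_anti s_ge0 (s_m m (leqnn m)).
have col0 (j : 'I_m) : (r <= j)%N -> forall k, B k j = 0.
  move=> hj k; have /matrixP/(_ j j) := hBB.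
  rewrite !mxE eqxx mulr1n s_zero // expr0n rmorph0.
  have ge0 l : 0 <= adjmx B j l * B l j by rewrite adjmxE -normCKC exprn_ge0.
  move=> sum0; have := @psumr_eq0P _ _ _ _ (fun l _ => ge0 l) sum0 k isT.
  by rewrite adjmxE -normCKC => /eqP; rewrite sqrf_eq0 normr_eq0 => /eqP.
have X_unitary := gram_normalized_unitary r_le_m hBB s_pos.
have r_le_n : (r <= n)%N by rewrite -(mxrank_unitary X_unitary) rank_leq_col.
have [U0 hU0 U0E] := unitarymx_complete X_unitary.
split.
  split=> // j; rewrite geq_min => /orP[] hj; last exact: s_m.
  by apply: s_zero; apply: leq_trans hj.
exists U0^T; first by rewrite trmx_unitary.
apply/matrixP => k j; rewrite mxE.
case: (ltnP j r) => hjr; last first.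
  rewrite col0 // big1 // => a _; rewrite !mxE.
  by case: eqP => [->|_]; rewrite ?s_zero ?rmorph0 ?mulr0.
have hjn := leq_trans hjr r_le_n.
rewrite (bigD1 (Ordinal hjn)) //= big1 ?addr0 => [|a ha]; last first.
  rewrite !mxE (_ : (a == j :> nat) = false) ?mulr0 //.
  by apply: contraNF ha => /eqP h; apply/eqP/val_inj.
rewrite !mxE eqxx (U0E (Ordinal hjn) hjr) mxE divfK ?fmorph_eq0 ?gt_eqF ?s_pos //.
by congr (B k _); apply: val_inj.
Qed.

Lemma svd_exists n m (A : 'M[C]_(n, m)) : exists s, singular_values A s.
Proof.
have hH : Defs.hermitian (adjmx A *m A) by rewrite /Defs.hermitian adjmxM adjmxK.
have [P [d [hP EH d_sorted]]] := hermitian_spectral_sorted hH.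
pose B := A *m adjmx P.
have hBB : adjmx B *m B = diag_mx d.
  rewrite adjmxM adjmxK !mulmxA -(mulmxA P) EH !mulmxA unitary_mul_adj // mul1mx.
  by rewrite -mulmxA unitary_mul_adj // mulmx1.
have d_ge0 j : 0 <= d 0 j.
  have /matrixP/(_ j j) := hBB; rewrite !mxE eqxx mulr1n => <-.
  by rewrite sumr_ge0 // => k _; rewrite adjmxE -normCKC exprn_ge0.
have Re_d_ge0 j : 0 <= complex.Re (d 0 j) by have := d_ge0 j; rewrite lecE => /andP[].
pose s j := if (insub j : option 'I_m) is Some i then Num.sqrt (complex.Re (d 0 i)) else 0.
have sE (i : 'I_m) : s i = Num.sqrt (complex.Re (d 0 i)) by rewrite /s valK.
have s_m j : (m <= j)%N -> s j = 0 by move=> hj; rewrite /s insubN // -leqNgt.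
have s_ge0 j : 0 <= s j by rewrite /s; case: insub => // i; apply: sqrtr_ge0.
have s_anti i j : (i <= j)%N -> s j <= s i.
  move=> hij; case: (ltnP j m) => hjm; last by rewrite s_m.
  have him := leq_ltn_trans hij hjm.
  by rewrite (sE (Ordinal hjm)) (sE (Ordinal him)) ler_sqrt // d_sorted.
have dE : d = \row_j ((s j) ^+ 2)%:C%C.
  apply/rowP => j; rewrite mxE sE sqr_sqrtr //.
  exact/esym/RRe_real/ger0_real.
rewrite dE in hBB; have [s_seq [U hU hB]] := gram_diag_factor s_anti s_ge0 s_m hBB.
exists s; have -> : A = U *m rdiag n m s *m adjmx (adjmx P).
  by rewrite adjmxK -hB -mulmxA unitary_adj_mul // mulmx1.
exact: singular_values_svd hU (adjmx_unitary hP) s_seq.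
Qed.

End SVD.

Section Admissibility.
Variable R : realType.
Local Notation C := (R[i]).

Lemma ceil_nat (k : nat) : Num.ceil (k%:R : R) = k%:Z.
Proof. exact: (intrKceil k%:Z). Qed.

Lemma ceil_natD (k : nat) (t : R) : 0 < t < 1 -> Num.ceil (k%:R + t) = k.+1%:Z.
Proof.
move=> /andP[t0 t1]; apply: ceil_def.
by rewrite intrB -!pmulrn -natr1; apply/andP; split; lra.
Qed.

Lemma truncn_natD (k : nat) (t : R) : 0 < t < 1 -> Num.truncn (k%:R + t) = k.
Proof. by move=> /andP[t0 t1]; apply: truncn_def; rewrite -natr1; apply/andP; split; lra. Qed.

(* [admissible alpha A] unfolds to
   [unit_vec A /\ exists s, singular_values A s /\ sv_admissible alpha s]. *)
Definition sv_admissible (alpha : R) (s : nat -> R) : Prop :=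
  (forall j : nat, Num.ceil alpha <= j%:Z -> s j = 0) /\
  (let k' := Num.truncn alpha in
   let theta := alpha - k'%:R in
   0 < theta -> s k' <= theta / k'%:R * \sum_(j < k') s j).

Lemma sv_admissible_nat (k : nat) (s : nat -> R) :
  (forall j, (k <= j)%N -> s j = 0) -> sv_admissible k%:R s.
Proof.
move=> s_k; split=> [j|]; first by rewrite ceil_nat lez_nat; apply: s_k.
by rewrite /= natrK subrr ltxx.
Qed.

Lemma sv_admissible_mono (a b : R) (s : nat -> R) : (forall j, 0 <= s j) ->
  0 <= a -> a <= b -> sv_admissible a s -> sv_admissible b s.
Proof.
move=> s_ge0 a0 ab [s_ceil /= s_theta]; split=> [j hj|/= hb].
  by apply: s_ceil; apply: le_trans hj; apply: ceil_le.
set kb := Num.truncn b; set ka := Num.truncn a.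
have rhs_ge0 : 0 <= (b - kb%:R) / kb%:R * \sum_(j < kb) s j.
  by rewrite mulr_ge0 ?divr_ge0 ?sumr_ge0 ?(ltW hb).
have /andP[ka_le_a a_lt_ka1] := truncn_itv a0.
have [ka_lt_kb|kb_le_ka] := ltnP ka kb.
  rewrite (s_ceil kb) // (@le_trans _ _ ka.+1%:Z) ?lez_nat //.
  by rewrite ceil_le_int ltW.
have ekab : ka = kb by apply/eqP; rewrite eqn_leq kb_le_ka le_truncn.
rewrite -ekab in rhs_ge0 *; have [ha|] := ltrP 0 (a - ka%:R).
  apply: le_trans (s_theta ha) _.
  by rewrite ler_wpM2r ?sumr_ge0 ?ler_wpM2r ?invr_ge0 ?lerD2r.
rewrite subr_le0 => a_le_ka; rewrite (s_ceil ka) //.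
by rewrite (_ : a = ka%:R) ?ceil_nat //; apply/eqP; rewrite eq_le a_le_ka.
Qed.

Lemma admissible_mono n m (a b : R) (A : 'M[C]_(n, m)) :
  0 <= a -> a <= b -> admissible a A -> admissible b A.
Proof.
move=> a0 ab [hu [s [hs s_adm]]]; split=> //; exists s; split=> //.
by have [_ s_ge0 _] := singular_values_seq hs; apply: sv_admissible_mono s_adm.
Qed.

Lemma cone_V_mono n m (a b : R) (rho : 'M[C]_(n * m)) :
  0 <= a -> a <= b -> cone_V n m a rho -> cone_V n m b rho.
Proof.
move=> a0 ab [N [c [A [hA ->]]]]; exists N, c, A; split => // l.
by have [c0 hadm] := hA l; split => //; apply: admissible_mono hadm.
Qed.

Lemma Kset_mono n m (a b : R) (rho : 'M[C]_(n * m)) :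
  0 <= a -> a <= b -> Kset n m a rho -> Kset n m b rho.
Proof.
move=> a0 ab hK e e0; have [sigma [hs hd]] := hK e e0.
by exists sigma; split=> //; apply: cone_V_mono hs.
Qed.

Lemma Pset_anti n m (a b : R) (Phi : 'M[C]_n -> 'M[C]_m) :
  0 <= a -> a <= b -> Pset b Phi -> Pset a Phi.
Proof. by move=> a0 ab hP A hA; apply: hP; apply: admissible_mono hA. Qed.

Lemma Kset_cone_V n m (a : R) (rho : 'M[C]_(n * m)) : cone_V n m a rho -> Kset n m a rho.
Proof.
move=> hrho e e0; exists rho; split=> // p q.
by rewrite subrr normr0 ltcR.
Qed.

Lemma admissible_min n m (A : 'M[C]_(n, m)) : unit_vec A -> admissible (minn n m)%:R A.
Proof.
move=> hu; split=> //; have [s hs] := svd_exists A; exists s; split=> //.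
by apply: sv_admissible_nat; have [] := singular_values_seq hs.
Qed.

Lemma psd_sum_proj n m (rho : 'M[C]_(n * m)) : psd rho ->
  exists (c : 'I_(n * m) -> R) (A : 'I_(n * m) -> 'M[C]_(n, m)),
    (forall l, 0 <= c l /\ unit_vec (A l)) /\
    rho = \sum_l ((c l)%:C)%C *: proj (A l).
Proof.
move=> [hH hpos]; have [P [d [hP E]]] := hermitian_spectral hH.
pose v l := adjmx (row l P).
have row_form (X : 'M[C]_(n * m)) l l' :
    (adjmx (v l) *m X *m v l') 0 0 = (P *m X *m adjmx P) l l'.
  by rewrite adjmxK -row_mul !mxE; apply: eq_bigr => b _; rewrite !mxE.
have d_ge0 l : 0 <= d 0 l.
  have := hpos (v l); rewrite row_form E !mulmxA unitary_mul_adj // mul1mx.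
  by rewrite -mulmxA unitary_mul_adj // mulmx1 mxE eqxx mulr1n.
have d_real l : ((complex.Re (d 0 l))%:C)%C = d 0 l.
  exact/RRe_real/ger0_real.
exists (fun l => complex.Re (d 0 l)), (fun l => psi_mx (v l)); split=> [l|].
  split; first by have := d_ge0 l; rewrite -d_real ler0c.
  change (fro (psi_mx (v l)) = 1); rewrite -psi_vec_dot psi_mxK.
  by have := row_form 1%:M l l; rewrite !mulmx1 unitary_mul_adj // [RHS]mxE eqxx.
apply/matrixP => a b; rewrite E mul_mx_diag summxE mxE; apply: eq_bigr => l _.
by rewrite d_real [in RHS]mxE projE psi_mxK !mxE conjCK; ring.
Qed.

Lemma psd_Kset_min n m (rho : 'M[C]_(n * m)) : psd rho -> Kset n m (minn n m)%:R rho.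
Proof.
move=> /psd_sum_proj [c [A [hA ->]]]; apply: Kset_cone_V.
exists (n * m)%N, c, A; split=> // l.
by have [c0 hu] := hA l; split=> //; apply: admissible_min.
Qed.

End Admissibility.

Section Normalization.
Variable R : realType.
Local Notation C := (R[i]).

Lemma rdiagB n m (f g : nat -> R) :
  rdiag n m (fun j => f j - g j) = rdiag n m f - rdiag n m g.
Proof. by apply/matrixP => i j; rewrite !mxE; case: ifP; rewrite ?rmorphB ?subr0. Qed.

Lemma rdiagZ n m (a : R) (f : nat -> R) :
  rdiag n m (fun j => a * f j) = a%:C%C *: rdiag n m f.
Proof. by apply/matrixP => i j; rewrite !mxE; case: ifP; rewrite ?rmorphM ?mulr0. Qed.

Lemma unit_vec_svd n m (U : 'M[C]_n) (V : 'M[C]_m) (s : nat -> R) :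
  U \is unitarymx -> V \is unitarymx ->
  unit_vec (U *m rdiag n m s *m adjmx V) <-> \sum_(i < n | (i < m)%N) s i ^+ 2 = 1.
Proof.
move=> hU hV; rewrite /unit_vec -/(fro _) fro_svd //.
by split=> [h|->]; first by apply: complexI; rewrite h.
Qed.

Lemma sqr_le_sum_sv n m (s : nat -> R) j :
  (j < minn n m)%N -> s j ^+ 2 <= \sum_(i < n | (i < m)%N) s i ^+ 2.
Proof.
move=> hj; have hjn := leq_trans hj (geq_minl n m).
rewrite (bigD1 (Ordinal hjn)) ?(leq_trans hj (geq_minr n m)) //= lerDl.
by apply: sumr_ge0 => i _; apply: sqr_ge0.
Qed.

Lemma sv_le1 n m (A : 'M[C]_(n, m)) s :
  unit_vec A -> singular_values A s -> forall j, s j <= 1.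
Proof.
move=> hu hs j; have [_ s_ge0 s_min] := singular_values_seq hs.
have [_ [_ [_ [U [V [/unitarymxP hU [/unitarymxP hV hA]]]]]]] := hs.
have [hj|/s_min ->] := ltnP j (minn n m); last exact: ler01.
have sum1 : \sum_(i < n | (i < m)%N) s i ^+ 2 = 1.
  by apply/(unit_vec_svd _ hU hV); rewrite -hA.
by rewrite -(ler_pXn2r (n := 2)) ?nnegrE ?expr1n // -sum1 sqr_le_sum_sv.
Qed.

Lemma sv_seq_scale n m (c : R) (s : nat -> R) :
  0 < c -> sv_seq n m s -> sv_seq n m (fun j => s j / c).
Proof.
move=> c0 [s_anti s_ge0 s_min]; split=> [i j hij|j|j hj].
- by rewrite ler_wpM2r ?invr_ge0 ?(ltW c0) ?s_anti.
- by rewrite divr_ge0 ?(ltW c0).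
- by rewrite s_min ?mul0r.
Qed.

Lemma sv_admissible_scale (alpha c : R) (s : nat -> R) :
  0 < c -> sv_admissible alpha s -> sv_admissible alpha (fun j => s j / c).
Proof.
move=> c0 [s_ceil /= s_theta]; split=> [j hj|/= htheta]; first by rewrite s_ceil ?mul0r.
rewrite -mulr_suml mulrA ler_wpM2r ?invr_ge0 ?(ltW c0) //; exact: s_theta.
Qed.

Lemma admissible_normalize n m (alpha : R) (U : 'M[C]_n) (V : 'M[C]_m) (t : nat -> R) :
  U \is unitarymx -> V \is unitarymx -> sv_seq n m t -> sv_admissible alpha t ->
  0 < \sum_(i < n | (i < m)%N) t i ^+ 2 ->
  exists2 B, admissible alpha B &
    U *m rdiag n m t *m adjmx V = (Num.sqrt (\sum_(i < n | (i < m)%N) t i ^+ 2))%:C%C *: B.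
Proof.
move=> hU hV t_seq t_adm; set w := \sum_(i < n | _) _ => w_pos.
have N_pos : 0 < Num.sqrt w by rewrite sqrtr_gt0.
exists (U *m rdiag n m (fun j => t j / Num.sqrt w) *m adjmx V).
  split; first apply/unit_vec_svd => //.
    under eq_bigr do rewrite expr_div_n sqr_sqrtr ?(ltW w_pos) //.
    by rewrite -mulr_suml divff ?gt_eqF.
  exists (fun j => t j / Num.sqrt w); split; last exact: sv_admissible_scale.
  by apply: singular_values_svd => //; apply: sv_seq_scale.
have -> : rdiag n m t = (Num.sqrt w)%:C%C *: rdiag n m (fun j => t j / Num.sqrt w).
  by rewrite -rdiagZ; congr rdiag; apply: boolp.funext => j; rewrite mulrC divfK ?gt_eqF.
by rewrite -scalemxAr -scalemxAl.
Qed.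

End Normalization.

Section KRightContinuity.
Variable R : realType.
Local Notation C := (R[i]).

Lemma proj_scale n m (c : R) (A : 'M[C]_(n, m)) :
  proj (c%:C%C *: A) = (c ^+ 2)%:C%C *: proj A.
Proof.
apply/matrixP => p q; rewrite [RHS]mxE !projE psi_vecZ !mxE rmorphM /= conjC_real.
by rewrite rmorphXn /=; ring.
Qed.

Lemma norm_le_of_sqr (z : C) (x : R) :
  0 <= x -> `|z| ^+ 2 <= (x ^+ 2)%:C%C -> `|z| <= x%:C%C.
Proof. by move=> x0; rewrite rmorphXn /= (ler_pXn2r (n := 2)) // nnegrE ?normr_ge0 ?ler0c. Qed.

Lemma psi_vec_entry_le1 n m (A : 'M[C]_(n, m)) p : unit_vec A -> `|psi_vec A p 0| <= 1.
Proof.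
move=> hu; rewrite psi_vecE -[1 : C]/((1 : R)%:C%C) norm_le_of_sqr ?ler01 // expr1n.
by have := entry_le_fro A (mxtens_unindex p).1 (mxtens_unindex p).2; rewrite /fro hu.
Qed.

Lemma proj_diff_bound n m (A B : 'M[C]_(n, m)) (th : R) :
  unit_vec A -> th <= 1 -> (forall i j, `|(A - B) i j| <= th%:C%C) ->
  forall p q, `|proj A p q - proj B p q| <= (3 * th)%:C%C.
Proof.
move=> hu th1 hAB p q; rewrite !projE.
have diff_le r : `|psi_vec A r 0 - psi_vec B r 0| <= th%:C%C.
  have -> : psi_vec A r 0 - psi_vec B r 0 = psi_vec (A - B) r 0.
    by rewrite psi_vecB !mxE.
  by rewrite psi_vecE.
have dp := diff_le p; have dq := diff_le q.
set x := psi_vec A p 0 in dp *; set y := psi_vec A q 0 in dq *.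
set x' := psi_vec B p 0 in dp *; set y' := psi_vec B q 0 in dq *.
have hx1 : `|x| <= 1 by apply: psi_vec_entry_le1.
have hy1 : `|y| <= 1 by apply: psi_vec_entry_le1.
have th0 : 0 <= th by rewrite -ler0c (le_trans (normr_ge0 _) dp).
have hx'1 : `|x'| <= (1 + th)%:C%C.
  rewrite rmorphD /=; apply: le_trans (_ : `|x| + `|x' - x| <= _).
    by rewrite -{1}[x'](subrK x) addrC ler_normD.
  by rewrite lerD // distrC.
have -> : x * y^* - x' * y'^* = (x - x') * y^* + x' * (y - y')^*.
  by rewrite rmorphB /=; ring.
apply: le_trans (ler_normD _ _) _; rewrite !normrM !norm_conjC.
apply: le_trans (_ : th%:C%C * 1 + (1 + th)%:C%C * th%:C%C <= _).
  by apply: lerD; apply: ler_pM; rewrite ?normr_ge0 // -rmorphB norm_conjC.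
by rewrite mulr1 -rmorphM -rmorphD lecR; nra.
Qed.

Lemma sumr_le_support1 n (P : pred 'I_n) (f : nat -> R) k :
  (forall i, 0 <= f i) -> (forall i, i != k -> f i = 0) ->
  \sum_(i < n | P i) f i <= f k.
Proof.
move=> f_ge0 f_k; apply: le_trans (_ : \sum_(i < n) f i <= _).
  by rewrite [X in _ <= X](bigID P) /= lerDl sumr_ge0.
case: (ltnP k n) => hkn; last first.
  by rewrite big1 // => i _; rewrite f_k // neq_ltn (leq_trans (ltn_ord i) hkn).
rewrite (bigD1 (Ordinal hkn)) //= big1 ?addr0 // => i hi; apply: f_k.
by apply: contra hi => /eqP h; apply/eqP/val_inj.
Qed.

Lemma sv_admissible_next_le (k : nat) (th : R) (s : nat -> R) :
  (1 <= k)%N -> 0 < th < 1 -> (forall j, 0 <= s j <= 1) ->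
  sv_admissible (k%:R + th) s -> s k <= th.
Proof.
move=> k_ge1 th01 s01 [_ /=]; have /andP[th0 _] := th01.
rewrite truncn_natD // addrAC subrr add0r => /(_ th0) /le_trans; apply.
have k_pos : (0 : R) < k%:R by rewrite ltr0n.
apply: le_trans (_ : th / k%:R * k%:R <= _); last by rewrite divfK ?gt_eqF.
rewrite ler_wpM2l ?divr_ge0 ?(ltW th0) ?(ltW k_pos) //.
rewrite -[k in k%:R](card_ord k) -sumr_const; apply: ler_sum => j _.
by have /andP[] := s01 j.
Qed.

Definition trunc_sv (k : nat) (s : nat -> R) (j : nat) : R :=
  if (j < k)%N then s j else 0.

Lemma sv_seq_trunc n m k (s : nat -> R) : sv_seq n m s -> sv_seq n m (trunc_sv k s).
Proof.
move=> [s_anti s_ge0 s_min]; split=> [i j hij|j|j hj]; rewrite /trunc_sv.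
- by case: ifP => hj; [rewrite (leq_ltn_trans hij hj) s_anti | case: ifP].
- by case: ifP.
- by case: ifP => // _; apply: s_min.
Qed.

Lemma sum_sqr_trunc n m k (s : nat -> R) :
  \sum_(i < n | (i < m)%N) s i ^+ 2 =
  \sum_(i < n | (i < m)%N) trunc_sv k s i ^+ 2 +
  \sum_(i < n | (i < m)%N) (s i - trunc_sv k s i) ^+ 2.
Proof.
rewrite -big_split; apply: eq_bigr => i _ /=; rewrite /trunc_sv.
by case: ifP => _; rewrite ?subrr ?subr0 expr0n ?addr0 ?add0r.
Qed.

Lemma sum_sqr_sub_trunc n m k (s : nat -> R) : (forall j, (k < j)%N -> s j = 0) ->
  \sum_(i < n | (i < m)%N) (s i - trunc_sv k s i) ^+ 2 <= s k ^+ 2.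
Proof.
move=> s_gt_k; have d_sq j : (s j - trunc_sv k s j) ^+ 2 = if j == k then s k ^+ 2 else 0.
  rewrite /trunc_sv; case: (ltngtP j k) => [_|kj|->]; rewrite ?subrr ?subr0 ?expr0n //.
  by rewrite s_gt_k // expr0n.
apply: le_trans (sumr_le_support1 _ (f := fun j => (s j - trunc_sv k s j) ^+ 2) (k := k) _ _) _.
- by move=> j; apply: sqr_ge0.
- by move=> j /negbTE jk; rewrite d_sq jk.
- by rewrite d_sq eqxx.
Qed.

(* A (k + th)-admissible vector has s k <= th, so dropping its k-th Schmidt
   coefficient moves it by at most th. *)
Lemma admissible_trunc_approx n m (k : nat) (th : R) (A : 'M[C]_(n, m)) :
  (1 <= k)%N -> 0 < th < 1 -> admissible (k%:R + th) A ->
  exists (w : R) (B : 'M[C]_(n, m)), [/\ 0 <= w, admissible k%:R B &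
    forall p q, `|proj A p q - w%:C%C * proj B p q| <= (3 * th)%:C%C].
Proof.
move=> k_ge1 th01 [hu [s [hs s_adm]]]; have /andP[th_gt0 th_lt1] := th01.
have s_seq := singular_values_seq hs; have [_ s_ge0 _] := s_seq.
have [_ [_ [_ [U [V [/unitarymxP hU [/unitarymxP hV hA]]]]]]] := hs.
have s_k : s k <= th.
  by apply: sv_admissible_next_le s_adm => // j; rewrite s_ge0 (sv_le1 hu hs).
have s_gt_k j : (k < j)%N -> s j = 0.
  by case: s_adm => s_ceil _ hj; apply: s_ceil; rewrite ceil_natD // lez_nat.
have sum_d : \sum_(i < n | (i < m)%N) (s i - trunc_sv k s i) ^+ 2 <= th ^+ 2.
  apply: le_trans (sum_sqr_sub_trunc n m s_gt_k) _.
  by rewrite ler_pXn2r ?nnegrE ?(ltW th_gt0).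
have t_adm : sv_admissible k%:R (trunc_sv k s).
  by apply: sv_admissible_nat => j hj; rewrite /trunc_sv ltnNge hj.
have w_pos : 0 < \sum_(i < n | (i < m)%N) trunc_sv k s i ^+ 2.
  have sum1 : \sum_(i < n | (i < m)%N) s i ^+ 2 = 1.
    by apply/(unit_vec_svd _ hU hV); rewrite -hA.
  rewrite (sum_sqr_trunc n m k) in sum1.
  have -> : \sum_(i < n | (i < m)%N) trunc_sv k s i ^+ 2 =
            1 - \sum_(i < n | (i < m)%N) (s i - trunc_sv k s i) ^+ 2.
    by rewrite -sum1 addrK.
  by rewrite subr_gt0 (le_lt_trans sum_d) // expr_lt1 ?ltW.
have [B hB hUtV] := admissible_normalize hU hV (sv_seq_trunc k s_seq) t_adm w_pos.
exists (\sum_(i < n | (i < m)%N) trunc_sv k s i ^+ 2), B; split=> // [|p q].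
  exact: ltW.
have -> : (\sum_(i < n | (i < m)%N) trunc_sv k s i ^+ 2)%:C%C * proj B p q =
          proj (U *m rdiag n m (trunc_sv k s) *m adjmx V) p q.
  by rewrite hUtV proj_scale sqr_sqrtr ?(ltW w_pos) // [RHS]mxE.
apply: proj_diff_bound => // [|i j]; first exact: ltW.
rewrite hA -mulmxBl -mulmxBr -rdiagB norm_le_of_sqr ?(ltW th_gt0) //.
by rewrite (le_trans (entry_le_fro _ i j)) // fro_svd // lecR.
Qed.

Lemma mxtrace_proj n m (A : 'M[C]_(n, m)) : unit_vec A -> \tr (proj A) = 1.
Proof. by move=> hu; rewrite /proj mxtrace_mulC /mxtrace big_ord1 psi_vec_dot. Qed.

Lemma cone_V_trunc_approx n m (k : nat) (th : R) (sigma : 'M[C]_(n * m)) :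
  (1 <= k)%N -> 0 < th < 1 -> cone_V n m (k%:R + th) sigma ->
  exists2 sigma', cone_V n m k%:R sigma' &
    forall p q, `|sigma p q - sigma' p q| <= (3 * th)%:C%C * `|\tr sigma|.
Proof.
move=> k_ge1 th01 [N [c [A [hA ->]]]].
have approx l : exists wB : R * 'M[C]_(n, m),
    [/\ 0 <= wB.1, admissible k%:R wB.2 &
     forall p q, `|proj (A l) p q - (wB.1)%:C%C * proj wB.2 p q| <= (3 * th)%:C%C].
  have [_ hadm] := hA l.
  by have [w [B [*]]] := admissible_trunc_approx k_ge1 th01 hadm; exists (w, B).
have [f hf] := fin_all_exists approx.
have c_ge0 l : 0 <= c l by have [] := hA l.
have tr_sigma : `|\tr (\sum_l (c l)%:C%C *: proj (A l))| = (\sum_l c l)%:C%C.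
  have tr_l l : \tr ((c l)%:C%C *: proj (A l)) = (c l)%:C%C.
    by rewrite mxtraceZ mxtrace_proj ?mulr1 //; have [_ []] := hA l.
  by rewrite raddf_sum (eq_bigr _ (fun l _ => tr_l l)) -rmorph_sum ger0_norm ?ler0c ?sumr_ge0.
exists (\sum_l ((c l * (f l).1)%:C%C *: proj (f l).2)).
  exists N, (fun l => c l * (f l).1), (fun l => (f l).2); split=> // l.
  by have [w_ge0 hB _] := hf l; split=> //; apply: mulr_ge0.
move=> p q; rewrite tr_sigma rmorph_sum mulr_sumr.
rewrite !summxE -sumrB (le_trans (ler_norm_sum _ _ _)) // ler_sum // => l _.
rewrite ![((_ *: _ : 'M[C]_(n * m)) _ _)]mxE rmorphM -mulrA -mulrBr normrM ger0_norm ?ler0c //.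
by rewrite [X in _ <= X]mulrC ler_wpM2l ?ler0c //; case: (hf l).
Qed.

Lemma norm_mxtrace_near p (rho sigma : 'M[C]_p) :
  (forall r, `|rho r r - sigma r r| <= 1) -> `|\tr sigma| <= `|\tr rho| + p%:R.
Proof.
move=> close; apply: le_trans (_ : `|\tr rho| + `|\tr sigma - \tr rho| <= _).
  by rewrite -{1}[\tr sigma](subrK (\tr rho)) addrC ler_normD.
rewrite lerD2l -raddfB (le_trans (ler_norm_sum _ _ _)) //.
rewrite [X in _ <= X](_ : _ = \sum_(r < p) (1 : C)); last by rewrite sumr_const card_ord.
by rewrite ler_sum // => r _; rewrite !mxE distrC.
Qed.

(* [T] bounds [`|\tr sigma|] for every sigma entrywise 1-close to rho, and
   [th] is small enough that [3 * th * T <= e / 2]. *)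
Lemma Kset_right_cont n m (k : nat) (rho : 'M[C]_(n * m)) : (1 <= k)%N ->
  (forall t : R, 0 < t < 1 -> Kset n m (k%:R + t) rho) -> Kset n m k%:R rho.
Proof.
move=> k_ge1 hK e e_pos.
pose T := complex.Re `|\tr rho| + (n * m)%:R.
have tr_rho : `|\tr rho| = (complex.Re `|\tr rho|)%:C%C by rewrite RRe_real ?normr_real.
have T_ge0 : 0 <= T by rewrite addr_ge0 // -ler0c -tr_rho.
pose th := Num.min 2^-1 (e / (6 * (T + 1))).
have th_pos : 0 < th by rewrite lt_min invr_gt0 ltr0n divr_gt0 ?mulr_gt0 ?ltr0n ?ltr_wpDl.
have th01 : 0 < th < 1 by rewrite th_pos gt_min invf_lt1 ?ltr1n.
have thT : 3 * th * T <= e / 2.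
  have : th * (6 * (T + 1)) <= e.
    by rewrite -ler_pdivlMr ?mulr_gt0 ?ltr0n ?ltr_wpDl // ge_min lexx orbT.
  nra.
pose e' := Num.min (e / 2) 1.
have e'_pos : 0 < e' by rewrite lt_min divr_gt0 ?ltr01.
have [sigma [hsigma close]] := hK th th01 e' e'_pos.
have [sigma' hsigma' approx] := cone_V_trunc_approx k_ge1 th01 hsigma.
exists sigma'; split=> // p q.
have tr_sigma : `|\tr sigma| <= T%:C%C.
  rewrite rmorphD /= -tr_rho rmorph_nat norm_mxtrace_near // => r.
  rewrite (le_trans (ltW (close r r))) // -[1 : C]/((1 : R)%:C%C) lecR.
  by rewrite ge_min lexx orbT.
have -> : rho p q - sigma' p q = (rho p q - sigma p q) + (sigma p q - sigma' p q).
  by rewrite addrA subrK.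
apply: le_lt_trans (ler_normD _ _) _.
apply: lt_le_trans (_ : e'%:C%C + (3 * th)%:C%C * T%:C%C <= _).
  rewrite ltr_leD // (le_trans (approx p q)) // ler_wpM2l ?ler0c //.
  by rewrite mulr_ge0 ?(ltW th_pos).
rewrite -rmorphM -rmorphD lecR (splitr e) lerD ?mulrA //.
by rewrite ge_min lexx.
Qed.

End KRightContinuity.

Section PLeftContinuity.
Variable R : realType.
Local Notation C := (R[i]).

Lemma ge0_quadratic_near0 (x p q e0 : R) : 0 < e0 ->
  (forall eps, 0 < eps < e0 -> 0 <= x - eps * p + eps ^+ 2 * q) -> 0 <= x.
Proof.
move=> e0_pos H; rewrite leNgt; apply/negP => x_neg.
pose K := `|p| + `|q| + 1.
have K_pos : 0 < K by rewrite ltr_wpDl ?addr_ge0.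
pose eps := Num.min (e0 / 2) (Num.min 1 (- x / (2 * K))).
have eps_pos : 0 < eps.
  by rewrite !lt_min divr_gt0 ?ltr01 ?divr_gt0 ?oppr_gt0 ?mulr_gt0.
have eps_lt : eps < e0 by rewrite gt_min ltr_pdivrMr ?ltr_pMr ?ltr1n.
have eps_le1 : eps <= 1 by rewrite !ge_min lexx orbT.
have epsK : eps * K <= - x / 2.
  have eps_le : eps <= - x / (2 * K) by rewrite !ge_min lexx !orbT.
  by apply: le_trans (ler_wpM2r (ltW K_pos) eps_le) _; rewrite invfM mulrA divfK ?gt_eqF.
have := H eps (introT andP (conj eps_pos eps_lt)).
have f1 : 0 <= eps * (`|p| + p).
  by rewrite mulr_ge0 ?(ltW eps_pos) // -lerBlDr sub0r -normrN ler_norm.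
have f2 : 0 <= eps ^+ 2 * (`|q| - q) by rewrite mulr_ge0 ?sqr_ge0 // subr_ge0 ler_norm.
have f3 : 0 <= eps * (1 - eps) * `|q| by rewrite !mulr_ge0 ?subr_ge0 ?(ltW eps_pos).
move: epsK; rewrite /K; nra.
Qed.

Lemma ge0_quadratic_near0C (z a b : C) (e0 : R) : 0 < e0 ->
  (forall eps : R, 0 < eps < e0 -> 0 <= z - eps%:C%C * a + (eps ^+ 2)%:C%C * b) ->
  0 <= z.
Proof.
move=> e0_pos; case: z => x y; case: a => ar ai; case: b => br bi H.
have parts eps : 0 < eps < e0 ->
    y - eps * ai + eps ^+ 2 * bi = 0 /\ 0 <= x - eps * ar + eps ^+ 2 * br.
  move=> /H; rewrite lecE /= => /andP[/eqP him hre]; split.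
    by rewrite -him; ring.
  by move: hre; rewrite !mul0r !subr0.
have x_ge0 : 0 <= x by apply: (ge0_quadratic_near0 (p := ar) (q := br) e0_pos) => eps /parts[_ ?].
have y_ge0 : 0 <= y.
  by apply: (ge0_quadratic_near0 (p := ai) (q := bi) e0_pos) => eps /parts[-> _].
have y_le0 : 0 <= - y.
  apply: (ge0_quadratic_near0 (p := - ai) (q := - bi) e0_pos) => eps /parts[h _].
  have -> : - y - eps * - ai + eps ^+ 2 * - bi = - (y - eps * ai + eps ^+ 2 * bi) by ring.
  by rewrite h oppr0.
by rewrite lecE /= x_ge0 andbT eq_le -oppr_ge0 y_ge0 y_le0.
Qed.

Definition qform p (M : 'M[C]_p) (x : 'cV[C]_p) : C := (adjmx x *m M *m x) 0 0.

Lemma qform_subZ p (M : 'M[C]_p) (x y : 'cV[C]_p) (e : R) :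
  qform M (x - e%:C%C *: y) =
  qform M x - e%:C%C * ((adjmx x *m M *m y) 0 0 + (adjmx y *m M *m x) 0 0)
  + (e ^+ 2)%:C%C * qform M y.
Proof.
rewrite /qform adjmxB adjmxZ conjC_real !mulmxBl !mulmxBr -!scalemxAl -!scalemxAr.
by rewrite !mxE rmorphXn /=; ring.
Qed.

Lemma qformZ p (M : 'M[C]_p) (y : 'cV[C]_p) (c : R) :
  qform M (c%:C%C *: y) = (c ^+ 2)%:C%C * qform M y.
Proof.
rewrite /qform adjmxZ conjC_real -scalemxAl -scalemxAr -scalemxAl scalerA mxE rmorphXn /=.
by rewrite expr2.
Qed.

Definition lower_at (k : nat) (eps : R) (s : nat -> R) (j : nat) : R :=
  if j == k then s k - eps else s j.

Lemma rdiag_lower_at n m k eps (s : nat -> R) :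
  rdiag n m (lower_at k eps s) =
  rdiag n m s - eps%:C%C *: rdiag n m (fun j => (j == k)%:R).
Proof.
apply/matrixP => i j; rewrite !mxE /lower_at; case: (i == j :> nat).
  by case: eqP => [->|_]; rewrite ?rmorphB ?rmorph1 ?rmorph0 ?mulr1 ?mulr0 ?subr0.
by rewrite mulr0 subr0.
Qed.

Lemma sv_seq_pos_lt n m k (s : nat -> R) : sv_seq n m s -> 0 < s k -> (k < minn n m)%N.
Proof.
by move=> [_ _ s_min] sk_pos; rewrite ltnNge; apply/negP => /s_min sk0; rewrite sk0 ltxx in sk_pos.
Qed.

Lemma sv_seq_lower_at n m k eps (s : nat -> R) :
  sv_seq n m s -> (forall j, (k < j)%N -> s j = 0) -> 0 < eps < s k ->
  sv_seq n m (lower_at k eps s).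
Proof.
move=> s_seq s_gt_k /andP[eps_pos eps_lt]; have [s_anti s_ge0 s_min] := s_seq.
have k_min := sv_seq_pos_lt s_seq (lt_trans eps_pos eps_lt).
have lo_ge0 j : 0 <= lower_at k eps s j.
  by rewrite /lower_at; case: eqP => _; rewrite ?subr_ge0 ?(ltW eps_lt).
split=> // [i j hij|j hj]; last first.
  have jk : j != k by rewrite neq_ltn (leq_trans k_min hj) orbT.
  by rewrite /lower_at (negbTE jk) s_min.
rewrite /lower_at; case: (ltngtP j k) => [jk|kj|jk]; last subst j.
- by rewrite ltn_eqF ?s_anti // (leq_ltn_trans hij jk).
- by rewrite s_gt_k //; apply: lo_ge0.
- case: eqP => [//|_]; rewrite (le_trans _ (s_anti _ _ hij)) //.
  by rewrite gerBl ltW.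
Qed.

Lemma sv_admissible_lower_at (k : nat) (eps : R) (s : nat -> R) :
  (1 <= k)%N -> (forall i j, (i <= j)%N -> s j <= s i) ->
  (forall j, (k < j)%N -> s j = 0) -> 0 < eps < s k ->
  sv_admissible (k%:R + (s k - eps) / s k) (lower_at k eps s).
Proof.
move=> k_ge1 s_anti s_gt_k /andP[eps_pos eps_lt].
have sk_pos : 0 < s k := lt_trans eps_pos eps_lt.
have th01 : 0 < (s k - eps) / s k < 1.
  by rewrite divr_gt0 ?subr_gt0 //= ltr_pdivrMr // mul1r gtrBl.
split=> [j|/=].
  by rewrite ceil_natD // lez_nat => hj; rewrite /lower_at gtn_eqF // s_gt_k.
rewrite truncn_natD // addrAC subrr add0r => _.
have -> : \sum_(j < k) lower_at k eps s j = \sum_(j < k) s j.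
  by apply: eq_bigr => j _; rewrite /lower_at ltn_eqF.
have k_pos : (0 : R) < k%:R by rewrite ltr0n.
have sum_ge : k%:R * s k <= \sum_(j < k) s j.
  rewrite mulr_natl -[k in _ *+ k](card_ord k) -sumr_const ler_sum // => j _.
  exact/s_anti/ltnW.
rewrite /lower_at eqxx (le_trans _ (ler_wpM2l _ sum_ge)) //.
  by rewrite mulrA !divfK ?gt_eqF.
by rewrite !divr_ge0 ?subr_ge0 ?(ltW eps_lt) ?(ltW sk_pos).
Qed.

Lemma admissible_lower_at n m (k : nat) (eps : R) (U : 'M[C]_n) (V : 'M[C]_m)
    (s : nat -> R) :
  (1 <= k)%N -> U \is unitarymx -> V \is unitarymx -> sv_seq n m s ->
  (forall j, (k < j)%N -> s j = 0) -> 0 < eps < s k ->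
  exists2 B, admissible (k%:R + (s k - eps) / s k) B &
    exists c : R, U *m rdiag n m (lower_at k eps s) *m adjmx V = c%:C%C *: B.
Proof.
move=> k_ge1 hU hV s_seq s_gt_k eps_range; have [s_anti _ _] := s_seq.
have /andP[eps_pos eps_lt] := eps_range.
have w_pos : 0 < \sum_(i < n | (i < m)%N) lower_at k eps s i ^+ 2.
  apply: lt_le_trans (sqr_le_sum_sv _ (sv_seq_pos_lt s_seq (lt_trans eps_pos eps_lt))).
  by rewrite /lower_at eqxx exprn_gt0 // subr_gt0.
have [B hB hUV] := admissible_normalize hU hV (sv_seq_lower_at s_seq s_gt_k eps_range)
  (sv_admissible_lower_at k_ge1 s_anti s_gt_k eps_range) w_pos.
by exists B => //; eexists; exact: hUV.
Qed.

(* Lowering s k by eps makes A admissible for an index in (k, k + 1); the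
   quadratic form of the Choi matrix along this line is a polynomial in eps. *)
Lemma Pset_left_cont n m (k : nat) (Phi : 'M[C]_n -> 'M[C]_m) : (1 <= k)%N ->
  (forall t : R, 0 < t < 1 -> Pset (k%:R + t) Phi) -> Pset k.+1%:R Phi.
Proof.
move=> k_ge1 hP A [hu [s [hs s_adm]]].
have s_seq := singular_values_seq hs; have [_ s_ge0 _] := s_seq.
have s_gt_k j : (k < j)%N -> s j = 0.
  by case: s_adm => s_ceil _ hj; apply: s_ceil; rewrite ceil_nat lez_nat.
have [sk_le0|sk_pos] := lerP (s k) 0.
  have half : 0 < (2^-1 : R) < 1.
    by apply/andP; split; [rewrite invr_gt0 ltr0n | rewrite invf_lt1 ?ltr0n // ltr1n].
  apply: (hP _ half); apply: (@admissible_mono _ _ _ k%:R).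
  - by rewrite ler0n.
  - by rewrite lerDl invr_ge0 ler0n.
  split=> //; exists s; split=> //; apply: sv_admissible_nat => j.
  rewrite leq_eqVlt => /orP[/eqP <-|/s_gt_k //].
  by apply/eqP; rewrite eq_le sk_le0 s_ge0.
have [_ [_ [_ [U [V [/unitarymxP hU [/unitarymxP hV hA]]]]]]] := hs.
pose D := U *m rdiag n m (fun j => (j == k)%:R) *m adjmx V.
pose cross := (adjmx (psi_vec A) *m choi Phi *m psi_vec D) 0 0 +
              (adjmx (psi_vec D) *m choi Phi *m psi_vec A) 0 0.
change (0 <= qform (choi Phi) (psi_vec A)).
apply: (ge0_quadratic_near0C (a := cross) (b := qform (choi Phi) (psi_vec D)) sk_pos).
move=> eps eps_range; rewrite -qform_subZ.
have [B hB [c hc]] := admissible_lower_at k_ge1 hU hV s_seq s_gt_k eps_range.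
have -> : psi_vec A - eps%:C%C *: psi_vec D = c%:C%C *: psi_vec B.
  rewrite -!psi_vecZ -psi_vecB -hc hA rdiag_lower_at mulmxBr mulmxBl.
  by rewrite -scalemxAr -scalemxAl.
rewrite qformZ mulr_ge0 ?ler0c ?sqr_ge0 //; apply: (hP _ _ B hB).
have /andP[eps_pos eps_lt] := eps_range.
by rewrite divr_gt0 ?subr_gt0 //= ltr_pdivrMr // mul1r gtrBl.
Qed.

End PLeftContinuity.

Section Thresholds.
Local Open Scope classical_set_scope.
Variable R : realType.
Local Notation C := (R[i]).

Lemma FSN_ge1 n m (rho : 'M[C]_(n * m)) : (1 <= minn n m)%N -> psd rho ->
  1 <= FSN n m rho <= (minn n m)%:R.
Proof.
move=> d_ge1 hrho; rewrite /FSN; set S := [set a : R | _].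
have Sd : S (minn n m)%:R by split; [rewrite lexx ler1n d_ge1 | exact: psd_Kset_min].
have lbS : lbound S 1 by move=> a [/andP[]].
by rewrite lb_le_inf ?ge_inf //; [exists 1 | exists (minn n m)%:R].
Qed.

Lemma Kset_iff_FSN n m (k : nat) (rho : 'M[C]_(n * m)) :
  (1 <= k <= minn n m)%N -> psd rho -> (Kset n m k%:R rho <-> FSN n m rho <= k%:R).
Proof.
move=> /andP[k_ge1 k_le_d] hrho; rewrite /FSN; set S := [set a : R | _].
have S0 : S !=set0.
  by exists (minn n m)%:R; split; [rewrite lexx ler1n (leq_trans k_ge1) | exact: psd_Kset_min].
have lbS : has_lbound S by exists 1 => a [/andP[]].
split=> [hK|hFSN]; first by apply: ge_inf => //; split; rewrite ?ler1n ?ler_nat ?k_ge1.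
have [k_lt_d|] := ltnP k (minn n m); last first.
  move=> d_le_k; have -> : k = minn n m by apply/eqP; rewrite eqn_leq k_le_d.
  exact: psd_Kset_min.
apply: Kset_right_cont => // t /andP[t_pos t_lt1].
have k_lt : k%:R < k%:R + t by rewrite ltrDl.
have [a [/andP[a_ge1 _] hKa] a_lt] := inf_lt S0 (le_lt_trans hFSN k_lt).
by apply: (Kset_mono _ (ltW a_lt) hKa); apply: le_trans a_ge1.
Qed.

Lemma Pset_iff_tau n m (k : nat) (Phi : 'M[C]_n -> 'M[C]_m) :
  (1 <= k <= minn n m)%N -> Pset 1 Phi -> (Pset k%:R Phi <-> k%:R <= tau Phi).
Proof.
move=> /andP[k_ge1 k_le_d] hP1; rewrite /tau; set S := [set a : R | _].
have S0 : S !=set0 by exists 1; split; rewrite ?lexx ?ler1n ?(leq_trans k_ge1).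
have supS : has_sup S by split=> //; exists (minn n m)%:R => a [/andP[]].
split=> [hP|htau]; first by apply: sup_upper_bound => //; split; rewrite ?ler1n ?ler_nat ?k_ge1.
case: k k_ge1 k_le_d htau => [//|k] _ _ htau.
have [->|k_ge1] := posnP k; first exact: hP1.
apply: Pset_left_cont => // t /andP[t_pos t_lt1].
have k_lt : k%:R + t < k.+1%:R by rewrite -natr1 ltrD2l.
have [a [/andP[a_ge1 _] hPa] a_gt] := sup_gt S0 (lt_le_trans k_lt htau).
by apply: (Pset_anti _ (ltW a_gt) hPa); rewrite addr_ge0 ?ler0n ?(ltW t_pos).
Qed.

Lemma ceil_FSN_least n m (rho : 'M[C]_(n * m)) : (1 <= minn n m)%N -> psd rho ->
  exists l : nat, Num.ceil (FSN n m rho) = l%:Z /\ (1 <= l <= minn n m)%N /\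
    Kset n m l%:R rho /\
    forall l' : nat, (1 <= l' <= minn n m)%N -> Kset n m l'%:R rho -> (l <= l')%N.
Proof.
move=> d_ge1 hrho; have /andP[F_ge1 F_le_d] := FSN_ge1 d_ge1 hrho.
have ceil_pos : 0 < Num.ceil (FSN n m rho) by rewrite ceil_gt0 (lt_le_trans ltr01).
exists `|Num.ceil (FSN n m rho)|%N; set l := `|_|%N.
have ceilE : Num.ceil (FSN n m rho) = l%:Z by rewrite gez0_abs ?ltW.
have l_range : (1 <= l <= minn n m)%N.
  by rewrite -ltz_nat -lez_nat -ceilE ceil_pos ceil_le_int.
do !split => //.
  by apply/(Kset_iff_FSN l_range hrho); rewrite -[l%:R]/(l%:Z%:~R) -ceilE ceil_ge.
move=> l' l'_range /(Kset_iff_FSN l'_range hrho).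
by rewrite -lez_nat -ceilE -[l'%:R]/(l'%:Z%:~R) ceil_le_int.
Qed.

End Thresholds.

Theorem proposition4p4 (R : realType) (n m k : nat) :
  (1 <= k <= minn n m)%N ->
  (forall rho : 'M[R[i]]_(n * m), psd rho -> rho != 0 ->
     (Kset n m k%:R rho <-> FSN n m rho <= k%:R) /\
     (exists l : nat, Num.ceil (FSN n m rho) = l%:Z /\
        (1 <= l <= minn n m)%N /\ Kset n m l%:R rho /\
        forall l' : nat, (1 <= l' <= minn n m)%N -> Kset n m l'%:R rho -> (l <= l')%N)) /\
  (forall Phi : {linear 'M[R[i]]_n -> 'M[R[i]]_m},
     herm_preserving Phi -> Pset 1 Phi ->
     (Pset k%:R Phi <-> k%:R <= tau Phi)).
Proof.
move=> hk; have d_ge1 : (1 <= minn n m)%N by case/andP: hk => /leq_trans; apply.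
split=> [rho hrho _|Phi _ hP1]; last exact: Pset_iff_tau.
by split; [apply: Kset_iff_FSN | apply: ceil_FSN_least].
Qed.
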